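(* Let $\mathbf{X} \in \mathbb{R}^{n \times m}$ be a matrix with rows $\mathbf{x}_1^\top, \dots, \mathbf{x}_n^\top$ and let $\mathbf{y} = (y_1,\dots,y_n)^\top \in \mathbb{R}^n$. Assume $\mathbf{X}$ has full row rank, i.e. $\operatorname{rank}(\mathbf{X}) = n$. Let $\hat{\beta}^{\min\text{-}\ell_1}$ be a minimizer of $\|\beta\|_1$ subject to $\mathbf{X}\beta = \mathbf{y}$, and let $\hat{\beta}^{\min\text{-}\ell_2}$ be the minimizer of $\|\beta\|_2$ subject to $\mathbf{X}\beta = \mathbf{y}$. Then there exists $\bar{\delta} > 0$ such that: 1. $\hat{\beta}^{\min\text{-}\ell_1}$ minimizes $\beta \mapsto R_\infty^{\mathrm{adv}}(\beta; \delta)$ over $\mathbb{R}^m$ for all $0 < \delta < \bar{\delta}$; 2. $\hat{\beta}^{\min\text{-}\ell_2}$ minimizes $\beta \mapsto R_2^{\mathrm{adv}}(\beta; \delta)$ over $\mathbb{R}^m$ for all $0 < \delta < \bar{\delta}$.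
   Context: For $p \in [1,\infty]$ and $\delta \ge 0$, the empirical adversarial risk of a parameter $\beta \in \mathbb{R}^m$ on the data $\{(\mathbf{x}_i, y_i)\}_{i=1}^n \subset \mathbb{R}^m \times \mathbb{R}$ is $$R_p^{\mathrm{adv}}(\beta; \delta) = \frac{1}{n}\sum_{i=1}^n \max_{\|\Delta \mathbf{x}_i\|_p \le \delta} \big(y_i - (\mathbf{x}_i + \Delta\mathbf{x}_i)^\top \beta\big)^2,$$ where $\|\cdot\|_p$ is the $\ell_p$ norm on $\mathbb{R}^m$ (with $\|a\|_\infty = \max_i |a_i|$). *)

From mathcomp Require Import all_boot all_order all_algebra.
From mathcomp Require Import classical_sets reals.
Set Implicit Arguments. Unset Strict Implicit. Unset Printing Implicit Defensive.
Import Order.TTheory GRing.Theory Num.Theory.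
Local Open Scope ring_scope.
Local Open Scope classical_set_scope.

Definition l1norm (R : realType) (m : nat) (v : 'cV[R]_m) : R :=
  \sum_(j < m) `|v j 0|.
Definition l2norm (R : realType) (m : nat) (v : 'cV[R]_m) : R :=
  Num.sqrt (\sum_(j < m) v j 0 ^+ 2).
Definition linfnorm (R : realType) (m : nat) (v : 'cV[R]_m) : R :=
  \big[Num.max/0]_(j < m) `|v j 0|.

(* The max is written as the supremum of the
   (nonempty, bounded, compact-attained) set of losses. *)
Definition adv_risk (R : realType) (n m : nat) (nrm : 'cV[R]_m -> R)
  (X : 'M[R]_(n, m)) (y : 'cV[R]_n) (beta : 'cV[R]_m) (delta : R) : R :=
  n%:R^-1 * \sum_(i < n)
    sup [set (y i 0 - \sum_(j < m) (X i j + D j 0) * beta j 0) ^+ 2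
         | D in [set D : 'cV[R]_m | nrm D <= delta]].

Definition adv_risk_inf (R : realType) (n m : nat) X y beta delta :=
  @adv_risk R n m (@linfnorm R m) X y beta delta.
Definition adv_risk_2 (R : realType) (n m : nat) X y beta delta :=
  @adv_risk R n m (@l2norm R m) X y beta delta.

From mathcomp Require Import all_boot all_order all_algebra.
From mathcomp Require Import classical_sets reals.
From mathcomp Require Import ring lra.
Set Implicit Arguments. Unset Strict Implicit. Unset Printing Implicit Defensive.
Import Order.TTheory GRing.Theory Num.Theory.
Local Open Scope ring_scope.
Local Open Scope classical_set_scope.

(* If N is dual to the perturbation norm (|<D, b>| <= |D| N(b), with equality
   attained), the worst perturbation of size delta pushes every residual r_i
   away from 0 by delta N(b), so the adversarial risk of b is
   (1/n) sum_i (|r_i| + delta N(b))^2, and an interpolator b0 has risk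
   delta^2 N(b0)^2.  As X has a right inverse Z, b + Z r interpolates, so a
   minimal-norm interpolator satisfies N(b0) <= N(b) + C |r|_1 with
   C = sum_ji |Z_ji|.  Expanding the risk of b and using
   (sum_i |r_i|)^2 <= n sum_i r_i^2 shows that it dominates that of b0 once
   n delta C <= 1.  Both (linf, l1) and (l2, l2) are such dual pairs with
   N <= l1, and C depends only on X, so one threshold serves both. *)

Section RealInequalities.
Variable R : realType.

Lemma sqr_sum_mul_le k (a b : 'I_k -> R) :
  (\sum_i a i * b i) ^+ 2 <= (\sum_i a i ^+ 2) * (\sum_i b i ^+ 2).
Proof.
have lagrange : (\sum_i a i ^+ 2) * (\sum_i b i ^+ 2) *+ 2 - (\sum_i a i * b i) ^+ 2 *+ 2
    = \sum_i \sum_j (a i * b j - a j * b i) ^+ 2.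
  rewrite expr2 !big_distrlr /= mulr2n {2}exchange_big /=.
  rewrite -sumrMnl -big_split -sumrB; apply: eq_bigr => i _ /=.
  by rewrite -sumrMnl -big_split -sumrB; apply: eq_bigr => j _ /=; ring.
rewrite -subr_ge0 -(pmulrn_lge0 _ (ltn0Sn 1)) mulrnBl lagrange.
by apply: sumr_ge0 => i _; apply: sumr_ge0 => j _; exact: sqr_ge0.
Qed.

Lemma sum_sqr_le_sqr_sum k (x : 'I_k -> R) : (forall i, 0 <= x i) ->
  \sum_i x i ^+ 2 <= (\sum_i x i) ^+ 2.
Proof.
move=> x_ge0; rewrite [leRHS]expr2 mulr_suml; apply: ler_sum => i _.
by rewrite expr2 ler_wpM2l // (bigD1 i) //= lerDl sumr_ge0.
Qed.

Lemma sqr_shift_sum_ge k (r : 'I_k -> R) (a c u : R) :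
  (forall i, 0 <= r i) -> 0 <= a -> 0 <= c -> k%:R * c <= 1 ->
  0 <= u -> u <= a + c * \sum_i r i ->
  k%:R * u ^+ 2 <= \sum_i (r i + a) ^+ 2.
Proof.
move=> r_ge0 a_ge0 c_ge0 kc_le1 u_ge0 u_le.
set s := \sum_i r i; set T := \sum_i r i ^+ 2.
have s_ge0 : 0 <= s by exact: sumr_ge0.
have T_ge0 : 0 <= T by apply: sumr_ge0 => i _; exact: sqr_ge0.
have sT : s ^+ 2 <= k%:R * T.
  have := sqr_sum_mul_le (fun=> 1) r.
  by rewrite sumr_const card_ord expr1n mulr_natl; under eq_bigr do rewrite mul1r.
have -> : \sum_i (r i + a) ^+ 2 = T + 2 * a * s + k%:R * a ^+ 2.
  have -> : k%:R * a ^+ 2 = \sum_(i < k) a ^+ 2 by rewrite sumr_const card_ord mulr_natl.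
  by rewrite /T /s mulr_sumr -!big_split /=; apply: eq_bigr => i _; ring.
have kc_ge0 : 0 <= k%:R * c by rewrite mulr_ge0.
have ku_le : k%:R * u ^+ 2 <= k%:R * (a + c * s) ^+ 2.
  by rewrite ler_wpM2l // lerXn2r // nnegrE addr_ge0 // mulr_ge0.
have cross_le : a * s * (k%:R * c) <= a * s by rewrite ler_piMr ?mulr_ge0.
have quad_le : c ^+ 2 * (k%:R * s ^+ 2) <= T.
  apply: le_trans (_ : (k%:R * c) ^+ 2 * T <= T); last by rewrite ler_piMl // expr_le1.
  have -> : c ^+ 2 * (k%:R * s ^+ 2) = k%:R * c ^+ 2 * s ^+ 2 by ring.
  have -> : (k%:R * c) ^+ 2 * T = k%:R * c ^+ 2 * (k%:R * T) by ring.
  by rewrite ler_wpM2l // mulr_ge0 ?sqr_ge0.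
have expand : k%:R * (a + c * s) ^+ 2
    = k%:R * a ^+ 2 + 2 * (a * s * (k%:R * c)) + c ^+ 2 * (k%:R * s ^+ 2) by ring.
lra.
Qed.

Lemma sup_attained (E : set R) x : E x -> ubound E x -> sup E = x.
Proof.
move=> Ex ubx; apply/le_anti/andP; split; first by apply: ge_sup => //; exists x.
by apply: ub_le_sup => //; exists x.
Qed.

End RealInequalities.

Section Norms.
Variables (R : realType) (m : nat).
Implicit Types (b c D : 'cV[R]_m) (d : R).

Definition vdot D b : R := \sum_j D j 0 * b j 0.

Lemma vdotNl D b : vdot (- D) b = - vdot D b.
Proof. by rewrite /vdot -sumrN; apply: eq_bigr => j _; rewrite mxE mulNr. Qed.

Lemma l1norm_ge0 b : 0 <= l1norm b.
Proof. exact: sumr_ge0. Qed.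

Lemma l1normD b c : l1norm (b + c) <= l1norm b + l1norm c.
Proof.
by rewrite /l1norm -big_split; apply: ler_sum => j _; rewrite mxE ler_normD.
Qed.

Lemma linfnormN D : linfnorm (- D) = linfnorm D.
Proof. by apply: eq_bigr => j _; rewrite mxE normrN. Qed.

Lemma abs_vdot_le_linf_l1 D b : `|vdot D b| <= linfnorm D * l1norm b.
Proof.
apply: le_trans (ler_norm_sum _ _ _) _; rewrite /l1norm mulr_sumr.
apply: ler_sum => j _; rewrite normrM ler_wpM2r //.
exact: (le_bigmax _ (fun j => `|D j 0|)).
Qed.

Lemma vdot_linf_l1_attained b d : 0 <= d ->
  exists D, linfnorm D <= d /\ vdot D b = d * l1norm b.
Proof.
move=> d_ge0; exists (\col_j (if 0 <= b j 0 then d else - d)); split.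
  apply: bigmax_le => // j _; rewrite mxE.
  by case: ifP => _; rewrite ?normrN ger0_norm.
rewrite /vdot /l1norm mulr_sumr; apply: eq_bigr => j _; rewrite mxE.
case: ifPn => [b_ge0|b_lt0]; first by rewrite ger0_norm.
by rewrite ltr0_norm ?ltNge // mulNr mulrN.
Qed.

Lemma l2norm_ge0 b : 0 <= l2norm b.
Proof. exact: sqrtr_ge0. Qed.

Lemma l2normN D : l2norm (- D) = l2norm D.
Proof. by congr Num.sqrt; apply: eq_bigr => j _; rewrite mxE sqrrN. Qed.

Lemma sqr_l2norm b : l2norm b ^+ 2 = \sum_j b j 0 ^+ 2.
Proof. by rewrite sqr_sqrtr //; apply: sumr_ge0 => j _; exact: sqr_ge0. Qed.

Lemma l2normZ (a : R) b : l2norm (a *: b) = `|a| * l2norm b.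
Proof.
rewrite /l2norm -sqrtr_sqr -sqrtrM ?sqr_ge0 // mulr_sumr.
by congr Num.sqrt; apply: eq_bigr => j _; rewrite mxE exprMn.
Qed.

Lemma abs_vdot_le_l2 D b : `|vdot D b| <= l2norm D * l2norm b.
Proof.
rewrite -ler_sqr ?nnegrE ?mulr_ge0 ?l2norm_ge0 // real_normK ?num_real //.
by rewrite exprMn !sqr_l2norm sqr_sum_mul_le.
Qed.

Lemma vdot_l2_attained b d : 0 <= d ->
  exists D, l2norm D <= d /\ vdot D b = d * l2norm b.
Proof.
move=> d_ge0; have [b0|b_neq0] := eqVneq (l2norm b) 0.
  exists 0; rewrite b0 mulr0 /vdot big1 => [|j _]; last by rewrite mxE mul0r.
  by rewrite /l2norm big1 ?sqrtr0 // => j _; rewrite mxE expr0n.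
exists ((d / l2norm b) *: b); split.
  by rewrite l2normZ ger0_norm ?divr_ge0 ?l2norm_ge0 // divfK.
have -> : vdot ((d / l2norm b) *: b) b = d / l2norm b * l2norm b ^+ 2.
  by rewrite sqr_l2norm mulr_sumr; apply: eq_bigr => j _; rewrite mxE expr2 mulrA.
by rewrite expr2 mulrA divfK.
Qed.

Lemma l2normD b c : l2norm (b + c) <= l2norm b + l2norm c.
Proof.
rewrite -ler_sqr ?nnegrE ?addr_ge0 ?l2norm_ge0 // sqr_l2norm.
have -> : \sum_j (b + c) j 0 ^+ 2 = l2norm b ^+ 2 + l2norm c ^+ 2 + 2 * vdot b c.
  rewrite !sqr_l2norm /vdot mulr_sumr -!big_split /=.
  by apply: eq_bigr => j _; rewrite !mxE; ring.
have := abs_vdot_le_l2 b c; have := ler_norm (vdot b c).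
set t := vdot b c; set u := l2norm b; set v := l2norm c; set w := `|t|.
nra.
Qed.

Lemma l2norm_le_l1norm b : l2norm b <= l1norm b.
Proof.
rewrite -ler_sqr ?nnegrE ?l2norm_ge0 ?l1norm_ge0 // sqr_l2norm /l1norm.
under eq_bigr => j _ do rewrite -real_normK ?num_real //.
by apply: sum_sqr_le_sqr_sum => j; exact: normr_ge0.
Qed.

End Norms.

Lemma l1norm_mulmx_le (R : realType) (k m : nat) (Z : 'M[R]_(m, k)) (v : 'cV[R]_k) :
  l1norm (Z *m v) <= (\sum_j \sum_i `|Z j i|) * l1norm v.
Proof.
rewrite /l1norm mulr_suml; apply: ler_sum => j _; rewrite mxE mulr_suml.
apply: le_trans (ler_norm_sum _ _ _) _; apply: ler_sum => i _.
rewrite normrM ler_wpM2l // (bigD1 i) //= lerDl.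
by apply: sumr_ge0.
Qed.

Section DualPair.
Variables (R : realType) (m : nat) (nrm N : 'cV[R]_m -> R).
Hypothesis N_ge0 : forall b, 0 <= N b.
Hypothesis abs_vdot_le : forall D b, `|vdot D b| <= nrm D * N b.
Hypothesis vdot_attained :
  forall b d, 0 <= d -> exists D, nrm D <= d /\ vdot D b = d * N b.
Hypothesis nrmN : forall D, nrm (- D) = nrm D.

Lemma sup_sqr_perturbed_residual (b : 'cV[R]_m) (r d : R) : 0 <= d ->
  sup [set (r - vdot D b) ^+ 2 | D in [set D | nrm D <= d]] = (`|r| + d * N b) ^+ 2.
Proof.
move=> d_ge0; apply: sup_attained.
  have [D [D_le vdotD]] := vdot_attained b d_ge0.
  have [r_ge0|r_lt0] := leP 0 r.
    by exists (- D); rewrite /= ?nrmN // vdotNl vdotD opprK ger0_norm.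
  by exists D => //; rewrite vdotD ltr0_norm // -sqrrN opprB addrC.
move=> _ [D /= D_le <-].
have vdot_le : `|vdot D b| <= d * N b.
  by apply: le_trans (abs_vdot_le D b) _; rewrite ler_wpM2r.
rewrite -real_normK ?num_real // lerXn2r ?nnegrE ?addr_ge0 ?mulr_ge0 //.
by apply: le_trans (ler_normB _ _) _; rewrite lerD2l.
Qed.

Lemma adv_risk_dual (n : nat) (X : 'M[R]_(n, m)) y b d : 0 <= d ->
  adv_risk nrm X y b d = n%:R^-1 * \sum_i (`|(y - X *m b) i 0| + d * N b) ^+ 2.
Proof.
move=> d_ge0; congr (_ * _); apply: eq_bigr => i _.
rewrite -(sup_sqr_perturbed_residual _ _ d_ge0); congr sup.
have residual (D : 'cV[R]_m) : y i 0 - \sum_j (X i j + D j 0) * b j 0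
    = (y - X *m b) i 0 - vdot D b.
  rewrite !mxE /vdot -addrA -opprD -big_split /=; congr (_ - _).
  by apply: eq_bigr => j _; rewrite mulrDl.
by apply/seteqP; split => _ [D D_le <-]; exists D; rewrite ?residual.
Qed.

Lemma adv_risk_interpolator_le (n : nat) (X : 'M[R]_(n, m)) y bs (C : R) :
  0 <= C -> X *m bs = y ->
  (forall b, N bs <= N b + C * l1norm (y - X *m b)) ->
  forall d, 0 <= d -> n%:R * d * C <= 1 ->
  forall b, adv_risk nrm X y bs d <= adv_risk nrm X y b d.
Proof.
move=> C_ge0 Xbs bs_le d d_ge0 ndC_le1 b.
rewrite !adv_risk_dual // ler_wpM2l ?invr_ge0 // Xbs subrr.
under eq_bigr do rewrite mxE normr0 add0r.
rewrite sumr_const card_ord -mulr_natl.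
apply: (sqr_shift_sum_ge (c := d * C)); rewrite ?mulr_ge0 ?mulrA //.
by rewrite -mulrA -mulrDr ler_wpM2l.
Qed.

End DualPair.

Lemma min_interpolator_le (R : realType) (n m : nat) (N : 'cV[R]_m -> R)
    (X : 'M[R]_(n, m)) y bs (Z : 'M[R]_(m, n)) :
  (forall b c, N (b + c) <= N b + N c) -> (forall b, N b <= l1norm b) ->
  X *m Z = 1%:M -> (forall b, X *m b = y -> N bs <= N b) ->
  forall b, N bs <= N b + (\sum_j \sum_i `|Z j i|) * l1norm (y - X *m b).
Proof.
move=> ND N_le_l1 XZ bs_min b.
have interp : X *m (b + Z *m (y - X *m b)) = y.
  by rewrite [X *m (b + _)]mulmxDr mulmxA XZ mul1mx addrC subrK.
apply: le_trans (bs_min _ interp) _; apply: le_trans (ND _ _) _.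
by rewrite lerD2l; apply: le_trans (N_le_l1 _) (l1norm_mulmx_le _ _).
Qed.

Theorem theorem2 (R : realType) (n m : nat) (X : 'M[R]_(n, m)) (y : 'cV[R]_n)
  (b1 b2 : 'cV[R]_m) :
  \rank X = n ->
  (* b1 is a minimum-l1-norm interpolator *)
  X *m b1 = y -> (forall b : 'cV[R]_m, X *m b = y -> l1norm b1 <= l1norm b) ->
  (* b2 is the minimum-l2-norm interpolator *)
  X *m b2 = y -> (forall b : 'cV[R]_m, X *m b = y -> l2norm b2 <= l2norm b) ->
  exists dbar : R, 0 < dbar /\
    forall delta : R, 0 < delta -> delta < dbar ->
      (forall b : 'cV[R]_m, adv_risk_inf X y b1 delta <= adv_risk_inf X y b delta) /\
      (forall b : 'cV[R]_m, adv_risk_2 X y b2 delta <= adv_risk_2 X y b delta).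
Proof.
move=> rankX Xb1 b1_min Xb2 b2_min.
have [Z XZ] : exists Z, X *m Z = 1%:M by apply/row_freeP; rewrite /row_free rankX.
set C := \sum_j \sum_i `|Z j i|.
have C_ge0 : 0 <= C by do 2!apply: sumr_ge0 => ? _.
have nC1_gt0 : 0 < n%:R * C + 1 by rewrite ltr_wpDl // mulr_ge0.
exists (n%:R * C + 1)^-1; split; first by rewrite invr_gt0.
move=> d d_gt0 d_lt; have d_ge0 := ltW d_gt0.
have ndC_le1 : n%:R * d * C <= 1.
  have : d * (n%:R * C + 1) < 1 by rewrite -ltr_pdivlMr // mul1r.
  have -> : n%:R * d * C = d * (n%:R * C + 1) - d by ring.
  lra.
split.
- apply: (adv_risk_interpolator_le (@l1norm_ge0 R m) (@abs_vdot_le_linf_l1 R m)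
    (@vdot_linf_l1_attained R m) (@linfnormN R m) C_ge0 Xb1) => //.
  exact: min_interpolator_le (@l1normD R m) (fun=> lexx _) XZ b1_min.
- apply: (adv_risk_interpolator_le (@l2norm_ge0 R m) (@abs_vdot_le_l2 R m)
    (@vdot_l2_attained R m) (@l2normN R m) C_ge0 Xb2) => //.
  exact: min_interpolator_le (@l2normD R m) (@l2norm_le_l1norm R m) XZ b2_min.
Qed.
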